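(* Let $\phi:v_{\mathcal{C},j}\mapsto y^{n_{\mathcal{C},j}}$ be a cyclotomic specialization and let $\chi,\psi\in\mathrm{Irr}(W)$ with sets of factor degrees $\mathcal{F}_\chi,\mathcal{F}_\psi$ (with respect to fixed factorizations of their generic Schur elements). If $a_{\chi,\epsilon}(\mathbf{t})=a_{\psi,\epsilon}(\mathbf{t})$ (resp. $A_{\chi,\epsilon}(\mathbf{t})=A_{\psi,\epsilon}(\mathbf{t})$) as polynomials in $\mathbf{t}$ for every good sign map $\epsilon$ for $\mathcal{F}_\chi\cup\mathcal{F}_\psi$, then $a_{\chi_\phi}=a_{\psi_\phi}$ (resp. $A_{\chi_\phi}=A_{\psi_\phi}$).
   Context: Setting: $K\subset\mathbb{Q}(\mu_\infty)$ a number field with ring of integers $\mathbb{Z}_K$; $W$ a finite irreducible complex reflection group defined over $K$, reflecting-hyperplane orbits $\mathcal{C}$ with stabilizer orders $e_{\mathcal{C}}$; $\mathcal{H}$ its generic Hecke algebra (assumed free of rank $|W|$ with canonical symmetrizing form), over $\mathbb{Z}_K[\mathbf{v},\mathbf{v}^{-1}]$ with indeterminates $v_{\mathcal{C},j}$, $0\le j\le e_{\mathcal{C}}-1$ (Hecke parameters $u_{\mathcal{C},j}=\zeta_{e_{\mathcal{C}}}^jv_{\mathcal{C},j}^{|\mu(K)|}$). For $\chi\in\mathrm{Irr}(W)$, the generic Schur element is fixed in the factorized form $(\dagger)\ s_\chi(\mathbf{v})=\xi_\chi N_\chi\prod_{i\in I_\chi}\Psi_{\chi,i}(M_{\chi,i})^{n_{\chi,i}}$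 with $\xi_\chi\in\mathbb{Z}_K$, $N_\chi=\prod v_{\mathcal{C},j}^{b_{\mathcal{C},j}}$ ($\sum_jb_{\mathcal{C},j}=0$ for all $\mathcal{C}$), $\Psi_{\chi,i}$ $K$-cyclotomic polynomials in one variable, $M_{\chi,i}=\prod v_{\mathcal{C},j}^{a_{\mathcal{C},j}}$ monomials with $\gcd(a_{\mathcal{C},j})=1$ and $\sum_ja_{\mathcal{C},j}=0$ for all $\mathcal{C}$, $n_{\chi,i}$ positive integers. Factor degrees: let $\mathbf{t}=(t_{\mathcal{C},j})$ be indeterminates. For a factor $\Psi(M)$ of $(\dagger)$ with $M=\prod v_{\mathcal{C},j}^{a_{\mathcal{C},j}}$, its factor degree is $f_{\Psi(M)}(\mathbf{t})=\deg(\Psi)\sum_{\mathcal{C},j}a_{\mathcal{C},j}t_{\mathcal{C},j}$, and its coefficient $\mathbf{c}(f_{\Psi(M)})$ is the largest $n$ such that $\Psi(M)^n$ appears in $(\dagger)$. $\mathcal{F}_\chi$ is the set of factor degrees for $\chi$. Two factor degrees satisfy $f_1\sim f_2$ if $f_1=qf_2$ for some rational $q>0$. A good sign map for a set $\mathcal{F}$ of factor degrees is a map $\epsilon:\mathcal{F}\to\{-1,1\}$ with $\epsilon(f_1)=\epsilon(f_2)$ whenever $f_1\sim f_2$ and $\epsilon(f_1)=-\epsilon(f_2)$ whenever $f_1\sim -f_2$. For a good sign map $\epsilon$ (restricted to $\mathcal{F}_\chi$), the generic valuation and generic degree are $a_{\chi,\epsilon}(\mathbf{t})=\sum_{\mathcal{C},j}b_{\mathcal{C},j}t_{\mathcal{C},j}+\sum_{f\in\mathcal{F}_\chi,\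 \epsilon(f)=-1}\mathbf{c}(f)f$, and $A_{\chi,\epsilon}(\mathbf{t})=\sum_{\mathcal{C},j}b_{\mathcal{C},j}t_{\mathcal{C},j}+\sum_{f\in\mathcal{F}_\chi,\ \epsilon(f)=1}\mathbf{c}(f)f$. A cyclotomic specialization is a $\mathbb{Z}_K$-algebra morphism $\phi:v_{\mathcal{C},j}\mapsto y^{n_{\mathcal{C},j}}$ ($n_{\mathcal{C},j}\in\mathbb{Z}$) into $\mathbb{Z}_K[y,y^{-1}]$ such that each $\prod_j(z-\zeta_{e_{\mathcal{C}}}^jy^{n_{\mathcal{C},j}})$ is invariant under $\mathrm{Gal}(K(y)/K(y^{|\mu(K)|}))$; $\chi_\phi$ is the corresponding character of the specialized algebra, with Schur element $s_{\chi_\phi}(y)=\phi(s_\chi(\mathbf{v}))$, $a_{\chi_\phi}$ its valuation (order at $y=0$) and $A_{\chi_\phi}$ its degree ($-$order at $0$ of $s_{\chi_\phi}(1/y)$). *)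

From HB Require Import structures.
From mathcomp Require Import all_boot all_order all_algebra all_field.
Set Implicit Arguments. Unset Strict Implicit. Unset Printing Implicit Defensive.
Import Order.TTheory GRing.Theory Num.Theory.
Local Open Scope ring_scope.

(* K is a number field contained in Q(mu_oo), viewed inside algC: a subfield
   of algC contained in Q(z) for some primitive n-th root of unity z. *)
Definition cyclo_numfield (K : {pred algC}) : Prop :=
  [/\ 1 \in K,
      (forall x y, x \in K -> y \in K -> (x - y \in K) /\ (x * y \in K)),
      (forall x, x \in K -> x^-1 \in K) &
      exists2 n : nat, (0 < n)%N &
        exists2 z : algC, n.-primitive_root z &
          forall x, x \in K -> exists p : {poly rat}, x = (map_poly ratr p).[z]].

Definition ZK (K : {pred algC}) (x : algC) : Prop := x \in K /\ x \in Aint.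

Definition polyOverK (K : {pred algC}) (p : {poly algC}) : Prop :=
  forall i, p`_i \in K.

Definition K_cyclotomic (K : {pred algC}) (P : {poly algC}) : Prop :=
  [/\ polyOverK K P, P \is monic, (1 < size P)%N,
      (forall p q, polyOverK K p -> polyOverK K q -> P = p * q ->
                   size p = 1%N \/ size q = 1%N) &
      (forall z, root P z -> exists2 k : nat, (0 < k)%N & z ^+ k = 1)].

(* zeta_e = exp(2 i pi / e)  (e.-root (-1) = exp(i pi / e)) *)
Definition zeta (e : nat) : algC := (e.-root (-1)) ^+ 2.

Definition var (C : finType) (e : C -> nat) := {c : C & 'I_(e c)}.

(* a family of integers indexed by the variables (exponent vector /
   linear form in the indeterminates t_{C,j}) *)
Definition lin (C : finType) (e : C -> nat) := {ffun var e -> int}.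

Definition class_sums_zero (C : finType) (e : C -> nat) (a : lin e) : Prop :=
  forall c : C, \sum_(i : var e | tag i == c) a i = 0.

(* s(v) = xi * N * prod_i Psi_i(M_i)^{n_i}; N = prod v^{b}, M_i = prod v^{a_i} *)
Record fschur (C : finType) (e : C -> nat) := FSchur {
  fs_xi : algC;
  fs_b : lin e;
  fs_facs : seq ({poly algC} * lin e * nat) }.

Definition wf_fschur (K : {pred algC}) (C : finType) (e : C -> nat) (s : fschur e) : Prop :=
  [/\ ZK K (fs_xi s), class_sums_zero (fs_b s) &
      forall x, x \in fs_facs s ->
        [/\ K_cyclotomic K x.1.1,
            \big[gcdn/0%N]_(i : var e) `|x.1.2 i|%N = 1%N,
            class_sums_zero x.1.2 & (0 < x.2)%N]].

Definition fdeg (C : finType) (e : C -> nat) (x : {poly algC} * lin e * nat) : lin e :=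
  [ffun i => ((size x.1.1).-1)%:Z * x.1.2 i].

Definition fdegs (C : finType) (e : C -> nat) (s : fschur e) : seq (lin e) :=
  undup [seq fdeg x | x <- fs_facs s].

Definition fcoef (C : finType) (e : C -> nat) (s : fschur e) (f : lin e) : nat :=
  \sum_(x <- fs_facs s | fdeg x == f) x.2.

Definition fsim (C : finType) (e : C -> nat) (f1 f2 : lin e) : Prop :=
  exists2 q : rat, 0 < q & forall i, (f1 i)%:~R = q * (f2 i)%:~R.

(* good sign maps for a set F; eps f = true means +1, false means -1 *)
Definition good_sign (C : finType) (e : C -> nat) (F : seq (lin e)) (eps : lin e -> bool) : Prop :=
  forall f1 f2, f1 \in F -> f2 \in F ->
    (fsim f1 f2 -> eps f1 = eps f2) /\ (fsim f1 (- f2) -> eps f1 = ~~ eps f2).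

Definition gen_val (C : finType) (e : C -> nat) (s : fschur e) (eps : lin e -> bool) : lin e :=
  fs_b s + \sum_(f <- fdegs s | ~~ eps f) f *~ (fcoef s f)%:Z.
Definition gen_deg (C : finType) (e : C -> nat) (s : fschur e) (eps : lin e -> bool) : lin e :=
  fs_b s + \sum_(f <- fdegs s | eps f) f *~ (fcoef s f)%:Z.

(* Gal(K(y)/K(y^{|mu(K)|})) consists of the
   maps y |-> w y, w in mu(K); invariance of prod_j (z - zeta^j y^{n_{C,j}})
   is stated as an identity of polynomial functions in (z, y), y <> 0. *)
Definition cyclotomic_spec (K : {pred algC}) (C : finType) (e : C -> nat) (n : lin e) : Prop :=
  forall w : algC, w \in K -> (exists2 k : nat, (0 < k)%N & w ^+ k = 1) ->
  forall (c : C) (z y : algC), y != 0 ->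
    \prod_(j < e c) (z - zeta (e c) ^+ j * (w * y) ^ (n (Tagged (fun c => 'I_(e c)) j)))
    = \prod_(j < e c) (z - zeta (e c) ^+ j * y ^ (n (Tagged (fun c => 'I_(e c)) j))).

Definition spec_schur (C : finType) (e : C -> nat) (s : fschur e) (n : lin e) (y : algC) : algC :=
  fs_xi s * y ^ (\sum_i fs_b s i * n i)
  * \prod_(x <- fs_facs s) (x.1.1.[y ^ (\sum_i x.1.2 i * n i)]) ^+ x.2.

(* valuation (order at y = 0) of a Laurent polynomial given by its values on
   algC^*: s(y) = y^a P(y) with P a polynomial, P(0) <> 0 *)
Definition laurent_val (s : algC -> algC) (a : int) : Prop :=
  exists2 P : {poly algC}, P.[0] != 0 & forall y, y != 0 -> s y = y ^ a * P.[y].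

Definition laurent_deg (s : algC -> algC) (A : int) : Prop :=
  laurent_val (fun y => s y^-1) (- A).

From HB Require Import structures.
From mathcomp Require Import all_boot all_order all_algebra all_field.
From mathcomp Require Import zify.
Import Order.TTheory GRing.Theory Num.Theory.
Local Open Scope ring_scope.
Set Implicit Arguments. Unset Strict Implicit.

(* The specialized Schur element is [xi y^(b.n) prod_i Psi_i(y^(a_i.n))^(n_i)], and a
   factor [Psi(y^m)] with [Psi(0) <> 0] has valuation [deg(Psi) min(m, 0)] (for [m = 0] the
   factor must not vanish, or the whole element would be 0).  Hence the valuation of
   [phi(s_chi)] is the generic valuation [a_{chi,eps}] evaluated at [t = n], for the sign map
   [eps(f) = sign f(n)], with ties [f(n) = 0] broken by the sign of the first nonzero
   coefficient of [f]; this makes [eps] good on any set of nonzero factor degrees.  As the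
   same [eps] serves [chi] and [psi], their valuations agree.  The degree at [n] is minus
   the valuation at [- n], and [A_{chi,eps} = a_{chi,-eps}]. *)

Lemma poly_eq0_off0 (p : {poly algC}) : (forall y, y != 0 -> p.[y] = 0) -> p = 0.
Proof.
move=> p_off0; apply/eqP; apply/negPn/negP => p_neq0.
suff: (size [seq (i.+1)%:R : algC | i <- iota 0 (size p)] < size p)%N.
  by rewrite size_map size_iota ltnn.
apply: max_poly_roots p_neq0 _ _.
  by apply/allP => y /mapP [i _ ->]; apply/rootP/p_off0; rewrite pnatr_eq0.
by rewrite map_inj_uniq ?iota_uniq // => i j /eqP; rewrite eqr_nat eqSS => /eqP.
Qed.

Lemma laurent_val_eq (s1 s2 : algC -> algC) a :
  (forall y, y != 0 -> s1 y = s2 y) -> laurent_val s1 a -> laurent_val s2 a.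
Proof. by move=> eq_s [P P0 sP]; exists P => // y y0; rewrite -eq_s // sP. Qed.

Lemma laurent_val_uniq s a b : laurent_val s a -> laurent_val s b -> a = b.
Proof.
wlog le_ab : a b / a <= b.
  by move=> W Ha Hb; case: (lerP a b) => [/W|/ltW/W]; [apply | move=> ->].
have [k ->] : exists k : nat, b = a + k%:Z.
  by exists `|b - a|%N; rewrite gez0_abs ?subr_ge0 // addrCA subrr addr0.
move=> [P P0 sP] [R R0 sR].
have PE : P = 'X^k * R.
  apply/eqP; rewrite -subr_eq0; apply/eqP/poly_eq0_off0 => y y0.
  have : y ^ a * P.[y] = y ^ a * ('X^k * R).[y].
    by rewrite -sP // sR // exprzDr ?unitfE // hornerM hornerXn mulrA.
  by move/(mulfI (expfz_neq0 a y0)); rewrite hornerD hornerN => ->; rewrite subrr.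
move: P0; rewrite PE hornerM hornerXn expr0n.
by case: k {PE sR} => [|k]; rewrite ?addr0 ?mul0r ?eqxx.
Qed.

Lemma laurent_val_neq0 s a : laurent_val s a -> ~ (forall y, y != 0 -> s y = 0).
Proof.
move=> [P P0 sP] s0; suff P_eq0 : P = 0 by rewrite P_eq0 horner0 eqxx in P0.
apply: poly_eq0_off0 => y y0; apply/eqP.
by have /eqP := s0 y y0; rewrite sP // mulf_eq0 expfz_eq0 (negPf y0) andbF.
Qed.

Lemma laurent_valM s1 s2 a b : laurent_val s1 a -> laurent_val s2 b ->
  laurent_val (fun y => s1 y * s2 y) (a + b).
Proof.
move=> [P P0 sP] [R R0 sR]; exists (P * R); first by rewrite hornerM mulf_neq0.
by move=> y y0; rewrite sP // sR // exprzDr ?unitfE // hornerM mulrACA.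
Qed.

Lemma laurent_valC (c : algC) : c != 0 -> laurent_val (fun=> c) 0.
Proof. by move=> c0; exists c%:P => [|y _]; rewrite hornerC // expr0z mul1r. Qed.

Lemma laurent_val_exprz (b : int) : laurent_val (fun y => y ^ b) b.
Proof. by exists 1 => [|y _]; rewrite hornerC ?oner_eq0 // mulr1. Qed.

Lemma laurent_val_prod (I : eqType) (r : seq I) (F : I -> algC -> algC)
    (v : I -> int) :
  (forall i, i \in r -> laurent_val (F i) (v i)) ->
  laurent_val (fun y => \prod_(i <- r) F i y) (\sum_(i <- r) v i).
Proof.
elim: r => [|i r IHr] Fv.
  rewrite big_nil; apply: laurent_val_eq (laurent_valC (oner_neq0 _)) => y _.
  by rewrite big_nil.
rewrite big_cons; apply: laurent_val_eq (laurent_valM (Fv i (mem_head _ _)) (IHr _)).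
  by move=> y _; rewrite big_cons.
by move=> j rj; apply: Fv; rewrite in_cons rj orbT.
Qed.

Lemma laurent_valX s a (k : nat) :
  laurent_val s a -> laurent_val (fun y => s y ^+ k) (a * k%:Z).
Proof.
move=> sa; elim: k => [|k IHk].
  rewrite mulr0; apply: laurent_val_eq (laurent_valC (oner_neq0 _)) => y _.
  by rewrite expr0.
rewrite intS mulrDr mulr1; apply: laurent_val_eq (laurent_valM sa IHk) => y _.
by rewrite exprS.
Qed.

Lemma horner_rev_inv (p : {poly algC}) u : u != 0 ->
  (Poly (rev p)).[u] = p.[u^-1] * u ^+ (size p).-1.
Proof.
move=> u0; rewrite (@horner_coef_wide _ (size p)); last by rewrite -(size_rev p) size_Poly.
rewrite horner_coef mulr_suml [RHS](reindex_inj rev_ord_inj) /=.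
apply: eq_bigr => i _; rewrite coef_Poly nth_rev ?size_rev //=.
have -> : (size p).-1 = (size p - i.+1 + i)%N by case: i => i /= lt_i; lia.
by rewrite exprD exprVn -mulrA mulKf ?expf_neq0.
Qed.

Lemma laurent_val_horner_exprz (p : {poly algC}) (m : int) :
  p.[0] != 0 -> (m != 0) || (p.[1] != 0) ->
  laurent_val (fun y => p.[y ^ m]) (if m < 0 then m * ((size p).-1)%:Z else 0).
Proof.
move=> p0; case: m => [k m_ok | k _] /=.
  exists (p \Po 'X^k) => [|y _]; last by rewrite horner_comp hornerXn expr0z mul1r.
  by rewrite horner_comp hornerXn expr0n; case: k m_ok.
exists (Poly (rev p) \Po 'X^(k.+1)) => [|y y0].
  rewrite horner_comp hornerXn expr0n /= horner_coef0 coef_Poly nth_rev ?size_poly_gt0.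
    by rewrite subn1 -lead_coefE lead_coef_eq0; apply: contraNneq p0 => ->; rewrite horner0.
  by apply: contraNneq p0 => ->; rewrite horner0.
rewrite horner_comp hornerXn horner_rev_inv ?expf_neq0 // -exprz_exp /exprz /=.
by rewrite exprVn mulrCA mulVf ?mulr1 ?expf_neq0.
Qed.

Fixpoint lex_sgz (s : seq int) : int :=
  if s is x :: s' then (if x == 0 then lex_sgz s' else sgz x) else 0.

Lemma lex_sgz_sgz s : lex_sgz (map (@sgz _) s) = lex_sgz s.
Proof. by elim: s => //= x s ->; rewrite (sgz_eq0 x) sgz_id. Qed.

Lemma lex_sgzN s : lex_sgz (map -%R s) = - lex_sgz s.
Proof. by elim: s => [|x s /= ->]; rewrite ?oppr0 // oppr_eq0 sgzN; case: ifP. Qed.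

Lemma lex_sgz_eq0 s : (lex_sgz s == 0) = all (eq_op^~ 0) s.
Proof.
elim: s => //= x s <-; case: ifP => [_ // | /negbT x_neq0 /=].
by rewrite -(negPf x_neq0); apply: sgz_eq0.
Qed.

Lemma sgz_intr_scale (x y : int) (q : rat) : x%:~R = q * y%:~R -> sgz x = sgz q * sgz y.
Proof. by move=> xqy; rewrite -(sgz_int rat) xqy sgzM sgz_int. Qed.

Section LinearForms.
Variables (C : finType) (e : C -> nat).
Implicit Types (n f g : lin e).

Definition lin_eval n f : int := \sum_i f i * n i.

Fact lin_eval_is_zmod_morphism n : zmod_morphism (lin_eval n).
Proof.
by move=> f g; rewrite /lin_eval -sumrB; apply: eq_bigr => i _; rewrite !ffunE mulrBl.
Qed.
HB.instance Definition _ n :=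
  GRing.isZmodMorphism.Build (lin e) int (lin_eval n) (lin_eval_is_zmod_morphism n).

Lemma lin_evalNl n f : lin_eval (- n) f = - lin_eval n f.
Proof. by rewrite /lin_eval -sumrN; apply: eq_bigr => i _; rewrite ffunE mulrN. Qed.

Lemma lin_eval_scale n f g (q : rat) : (forall i, (f i)%:~R = q * (g i)%:~R) ->
  (lin_eval n f)%:~R = q * (lin_eval n g)%:~R.
Proof.
move=> fqg; rewrite /lin_eval !rmorph_sum mulr_sumr; apply: eq_bigr => i _.
by rewrite !rmorphM /= fqg mulrA.
Qed.

(* The coordinates of [f] break ties [f(n) = 0] and keep [lex_sgz] nonzero
   whenever [f != 0]. *)
Definition sign_coords n f : seq int :=
  lin_eval n f :: [seq f i | i <- enum {: var e}].

Definition sign_at n f : bool := 0 < lex_sgz (sign_coords n f).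

Lemma sign_coordsN n f : sign_coords n (- f) = map -%R (sign_coords n f).
Proof.
rewrite /sign_coords /= raddfN -map_comp; congr (_ :: _).
by apply: eq_map => i; rewrite ffunE.
Qed.

Lemma lex_sgz_coords_eq0 n f : (lex_sgz (sign_coords n f) == 0) = (f == 0).
Proof.
rewrite lex_sgz_eq0 /=; apply/andP/eqP => [[_ /allP f0] | ->].
  by apply/ffunP => i; rewrite ffunE; apply/eqP/f0/map_f; rewrite mem_enum.
by rewrite raddf0; split=> //; apply/allP => _ /mapP [i _ ->]; rewrite ffunE.
Qed.

Lemma fsim_lex_sgz n f g :
  fsim f g -> lex_sgz (sign_coords n f) = lex_sgz (sign_coords n g).
Proof.
move=> [q q_gt0 fqg]; rewrite -lex_sgz_sgz -[RHS]lex_sgz_sgz /= -!map_comp.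
have sgz_fg x y : x%:~R = q * y%:~R -> sgz x = sgz y.
  by move/sgz_intr_scale; rewrite (gtr0_sgz q_gt0) mul1r.
rewrite (sgz_fg _ _ (lin_eval_scale n fqg)); congr (lex_sgz (_ :: _)).
by apply: eq_map => i /=; rewrite (sgz_fg _ _ (fqg i)).
Qed.

Lemma sign_at_good n F : (forall f, f \in F -> f != 0) -> good_sign F (sign_at n).
Proof.
move=> F_neq0 f g _ gF; rewrite /sign_at.
split=> [/(fsim_lex_sgz n) -> // | /(fsim_lex_sgz n) ->].
rewrite sign_coordsN lex_sgzN.
have : lex_sgz (sign_coords n g) != 0 by rewrite lex_sgz_coords_eq0 F_neq0.
by rewrite oppr_gt0; case: ltgtP.
Qed.

Lemma sign_at_lin_eval n f : lin_eval n f != 0 -> sign_at n f = (0 < lin_eval n f).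
Proof. by rewrite /sign_at /= => /negPf ->; rewrite sgz_gt0. Qed.

End LinearForms.

Lemma good_sign_negb (C : finType) (e : C -> nat) (F : seq (lin e)) eps :
  good_sign F eps -> good_sign F (fun f => ~~ eps f).
Proof.
move=> eps_good f g fF gF; have [sim_eq opp_eq] := eps_good f g fF gF.
by split=> [/sim_eq | /opp_eq] ->.
Qed.

Lemma sum_fibres_undup (R : nmodType) (I T : eqType) (g : I -> T) (r : seq I)
    (P : pred T) (F : I -> R) :
  \sum_(t <- undup (map g r) | P t) \sum_(i <- r | g i == t) F i
  = \sum_(i <- r | P (g i)) F i.
Proof.
under eq_bigr do rewrite big_mkcond.
rewrite exchange_big /= [RHS]big_mkcond; apply: eq_big_seq => i ri.
rewrite big_mkcond (bigD1_seq (g i)) ?undup_uniq ?mem_undup ?map_f //= eqxx.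
by rewrite big1 ?addr0 // => t /negPf; rewrite eq_sym => ->; case: (P t).
Qed.

Section SchurElements.
Variables (K : {pred algC}) (C : finType) (e : C -> nat).
Implicit Types (n : lin e) (s : fschur e).

Lemma K_cyclotomic_horner0 P : K_cyclotomic K P -> P.[0] != 0.
Proof.
case=> _ _ _ _ roots_unity; apply/negP => /roots_unity [k k_gt0].
by rewrite expr0n eqn0Ngt k_gt0 => /eqP; rewrite eq_sym oner_eq0.
Qed.

Lemma K_cyclotomic_deg_gt0 P : K_cyclotomic K P -> (0 < (size P).-1)%N.
Proof. by case=> _ _; case: (size P) => [|[]]. Qed.

Lemma fdegs_neq0 s f : wf_fschur K s -> f \in fdegs s -> f != 0.
Proof.
case=> _ _ wf_facs; rewrite mem_undup => /mapP [x /wf_facs [Psi_cyc gcd1 _ _] ->].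
apply: contra_eqN gcd1 => /eqP/ffunP fdeg0; rewrite big1 // => i _.
have := fdeg0 i; rewrite !ffunE => /eqP; rewrite mulf_eq0 eqz_nat.
by rewrite -[_ == 0%N]negbK -lt0n K_cyclotomic_deg_gt0 //= => /eqP ->.
Qed.

Lemma lin_eval_fdeg n (x : {poly algC} * lin e * nat) :
  lin_eval n (fdeg x) = ((size x.1.1).-1)%:Z * lin_eval n x.1.2.
Proof. by rewrite /lin_eval mulr_sumr; apply: eq_bigr => i _; rewrite ffunE mulrA. Qed.

Lemma lin_eval_gen_val n s eps : lin_eval n (gen_val s eps) =
  lin_eval n (fs_b s) + \sum_(x <- fs_facs s | ~~ eps (fdeg x)) lin_eval n (fdeg x) * x.2%:Z.
Proof.
rewrite raddfD raddf_sum; congr (_ + _).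
rewrite -[RHS](sum_fibres_undup _ _ (fun f => ~~ eps f)) /=.
apply: eq_bigr => f _; rewrite raddfMz -pmulrn -sumrMnr.
by apply: eq_bigr => x /eqP ->; rewrite pmulrn mulrzz.
Qed.

Lemma laurent_val_spec_factor n (x : {poly algC} * lin e * nat) :
  K_cyclotomic K x.1.1 -> (lin_eval n x.1.2 != 0) || (x.1.1.[1] != 0) ->
  laurent_val (fun y => x.1.1.[y ^ lin_eval n x.1.2] ^+ x.2)
    (if ~~ sign_at n (fdeg x) then lin_eval n (fdeg x) * x.2%:Z else 0).
Proof.
move=> Psi_cyc m_ok; rewrite lin_eval_fdeg.
set d := (size x.1.1).-1; set m := lin_eval n x.1.2.
suff -> : (if ~~ sign_at n (fdeg x) then d%:Z * m * x.2%:Z else 0)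
          = (if m < 0 then m * d%:Z else 0) * x.2%:Z.
  exact/laurent_valX/laurent_val_horner_exprz/m_ok/K_cyclotomic_horner0.
have [-> | m_neq0] := eqVneq m 0; first by rewrite mulr0 ltxx mul0r; case: ifP.
have d_gt0 : 0 < d%:Z by rewrite ltz_nat K_cyclotomic_deg_gt0.
rewrite sign_at_lin_eval lin_eval_fdeg -/d -/m ?mulf_neq0 ?(gt_eqF d_gt0) //.
rewrite pmulr_rgt0 //.
by case: ltgtP m_neq0; rewrite ?mul0r // [m * _]mulrC.
Qed.

Lemma spec_schur_nondegenerate n s a :
  wf_fschur K s -> laurent_val (spec_schur s n) a ->
  fs_xi s != 0 /\ {in fs_facs s, forall x, (lin_eval n x.1.2 != 0) || (x.1.1.[1] != 0)}.
Proof.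
case=> _ _ wf_facs /laurent_val_neq0 spec_neq0; split.
  by apply/eqP => xi0; apply: spec_neq0 => y _; rewrite /spec_schur xi0 !mul0r.
move=> x x_facs; apply/negPn/negP; rewrite negb_or !negbK => /andP [/eqP m0 /eqP Psi1].
have [_ _ _ mult_gt0] := wf_facs x x_facs.
apply: spec_neq0 => y _; rewrite /spec_schur (big_rem x x_facs) /= -/(lin_eval n x.1.2).
by rewrite m0 Psi1 expr0n eqn0Ngt mult_gt0 mul0r mulr0.
Qed.

Lemma laurent_val_spec_schur n s a :
  wf_fschur K s -> laurent_val (spec_schur s n) a ->
  a = lin_eval n (gen_val s (sign_at n)).
Proof.
move=> wf_s spec_a; have [xi_neq0 facs_ok] := spec_schur_nondegenerate wf_s spec_a.
have [_ _ wf_facs] := wf_s.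
have spec_facs := laurent_val_prod (fun x x_facs =>
  laurent_val_spec_factor (let: And4 Psi_cyc _ _ _ := wf_facs x x_facs in Psi_cyc)
                          (facs_ok x x_facs)).
rewrite lin_eval_gen_val big_mkcond -[lin_eval n (fs_b s)]add0r.
apply: laurent_val_uniq spec_a _; apply: laurent_val_eq (fun _ _ => erefl)
  (laurent_valM (laurent_valM (laurent_valC xi_neq0) (laurent_val_exprz _)) spec_facs).
Qed.

Lemma spec_schurV n s y : spec_schur s n y^-1 = spec_schur s (- n) y.
Proof.
rewrite /spec_schur -!/(lin_eval _ _) lin_evalNl exprz_inv; congr (_ * _).
by apply: eq_bigr => x _; rewrite -!/(lin_eval _ _) lin_evalNl exprz_inv.
Qed.

(* [gen_deg s] at a sign map is [gen_val s] at the opposite one, and the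
   degree at [n] is minus the valuation at [- n]. *)
Lemma laurent_deg_spec_schur n s A :
  wf_fschur K s -> laurent_deg (spec_schur s n) A ->
  A = lin_eval n (gen_deg s (fun f => ~~ sign_at (- n) f)).
Proof.
move=> wf_s spec_A; apply: oppr_inj; rewrite -lin_evalNl.
apply: laurent_val_spec_schur wf_s _; apply: laurent_val_eq spec_A => y _.
by rewrite spec_schurV.
Qed.

End SchurElements.

Unset Implicit Arguments.

Theorem proposition5p9 (K : {pred algC}) (C : finType) (e : C -> nat)
    (n : lin e) (chi psi : fschur e) :
  cyclo_numfield K -> (forall c, (1 < e c)%N) ->
  cyclotomic_spec K n -> wf_fschur K chi -> wf_fschur K psi ->
  ((forall eps, good_sign (fdegs chi ++ fdegs psi) eps ->
       gen_val chi eps = gen_val psi eps) ->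
     forall a1 a2, laurent_val (spec_schur chi n) a1 ->
       laurent_val (spec_schur psi n) a2 -> a1 = a2)
  /\
  ((forall eps, good_sign (fdegs chi ++ fdegs psi) eps ->
       gen_deg chi eps = gen_deg psi eps) ->
     forall A1 A2, laurent_deg (spec_schur chi n) A1 ->
       laurent_deg (spec_schur psi n) A2 -> A1 = A2).
Proof.
move=> _ _ _ wf_chi wf_psi.
have cat_fdegs_neq0 f : f \in fdegs chi ++ fdegs psi -> f != 0.
  by rewrite mem_cat => /orP [] f_in; [move: wf_chi | move: wf_psi] => /fdegs_neq0; apply.
split=> [eq_val a1 a2 chi_a1 psi_a2 | eq_deg A1 A2 chi_A1 psi_A2].
  rewrite (laurent_val_spec_schur wf_chi chi_a1) (laurent_val_spec_schur wf_psi psi_a2).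
  by rewrite eq_val //; apply: sign_at_good cat_fdegs_neq0.
rewrite (laurent_deg_spec_schur wf_chi chi_A1) (laurent_deg_spec_schur wf_psi psi_A2).
by rewrite eq_deg //; apply/good_sign_negb/sign_at_good/cat_fdegs_neq0.
Qed.
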